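(* Let $n\in\mathbb{N}_+$, $n\ge 3$, and \[ \phi_n(x):=(n+1)\int_0^1 t(1-t)^{n(1-x)}\frac{(1-t)^{nx}-t^{nx}}{1-2t}\,dt,\quad x\in[0,1]. \] Then $0\le\phi_n(x)\le \frac{4}{n}$ for all $x\in\left[0,1-\frac1n\right]$. *)

From HB Require Import structures.
From mathcomp Require Import all_boot all_order all_algebra.
From mathcomp Require Import all_classical all_reals all_analysis.
Set Implicit Arguments. Unset Strict Implicit. Unset Printing Implicit Defensive.
Import Order.TTheory GRing.Theory Num.Theory.
Local Open Scope classical_set_scope.
Local Open Scope ring_scope.

(* The integrand has a removable singularity at t = 1/2 (where the division
   by zero gives 0 in MathComp); this single point is Lebesgue-negligible. *)
Definition phi_integrand {R : realType} (n : nat) (x t : R) : R :=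
  t * ((1 - t) `^ (n%:R * (1 - x))) *
  (((1 - t) `^ (n%:R * x) - t `^ (n%:R * x)) / (1 - 2 * t)).

Definition phi {R : realType} (n : nat) (x : R) : R :=
  (n.+1)%:R * Rintegral lebesgue_measure `[0, 1] (phi_integrand n x).

(* Write u = 1 - t, a = n x and c = n (1 - x) - 1, so that c + a = n - 1 and
   c >= 0 exactly when x <= 1 - 1/n.  Divided differences (u^p - t^p) / (u - t)
   of powers are nonnegative, which gives phi_n >= 0 and also
     u^c (u^a - t^a) / (u - t) <= (u^(c+a) - t^(c+a)) / (u - t),
   the difference being t^a (u^c - t^c) / (u - t).  Hence the integrand is
   bounded by t u (u^(n-1) - t^(n-1)) / (u - t) = sum_(k=1)^(n-1) t^k u^(n-k),
   whose integral is a sum of Beta integrals k! (n-k)! / (n+1)!.  Finally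
   k! (n-k)! <= 2 (n-2)! for 2 <= k <= n-2 yields sum_k k! (n-k)! <= 4 n! / n. *)

From HB Require Import structures.
From mathcomp Require Import all_boot all_order all_algebra.
From mathcomp Require Import all_classical all_reals all_analysis.
From mathcomp Require Import ring lra zify measurable_realfun.
Import Order.TTheory GRing.Theory Num.Theory.
Local Open Scope classical_set_scope.
Local Open Scope ring_scope.

Lemma factSS_mul_le i j : (i.+2`! * j.+2`! <= 2 * (i + j).+2`!)%N.
Proof.
elim: i => [|i IH]; first by rewrite add0n.
rewrite addSn (factS i.+2) (factS (i + j).+2) -mulnA [X in (_ <= X)%N]mulnCA.
by apply: leq_mul IH; rewrite !ltnS leq_addr.
Qed.

Lemma sum_fact_le n : (n * \sum_(1 <= k < n) k`! * (n - k)`! <= 4 * n`!)%N.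
Proof.
case: n => [|[|[|m]]]; [by rewrite big_geq.. | by rewrite big_nat1 |].
rewrite big_ltn // big_nat_recr //=.
have mid : (\sum_(2 <= k < m.+2) k`! * (m.+3 - k)`! <= \sum_(2 <= k < m.+2) 2 * m.+1`!)%N.
  rewrite big_nat_cond [X in (_ <= X)%N]big_nat_cond.
  apply: leq_sum => k /andP[/andP[k2 km] _].
  have := factSS_mul_le (k - 2) (m.+1 - k).
  by have [-> -> ->] : [/\ (k - 2).+2 = k, (m.+1 - k).+2 = m.+3 - k
                         & (k - 2 + (m.+1 - k)).+2 = m.+1]%N by split; lia.
rewrite sum_nat_const_nat !subSS !subn0 subSnn [1`!]/= mul1n muln1 in mid *.
rewrite (factS m.+2) (factS m.+1); nia.
Qed.

Section powR_slope.
Variable R : realType.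
Implicit Types a c u t : R.

Lemma powR_slope_ge0 a u t : 0 <= a -> 0 <= u -> 0 <= t ->
  0 <= (u `^ a - t `^ a) / (u - t).
Proof.
move=> a0 u0 t0; have [ut|tu] := leP u t.
- apply: mulr_le0; last by rewrite invr_le0 subr_le0.
  by rewrite subr_le0; apply: ge0_ler_powR; rewrite ?nnegrE.
- have {}tu := ltW tu; apply: divr_ge0; rewrite subr_ge0 //.
  by apply: ge0_ler_powR; rewrite ?nnegrE.
Qed.

Lemma powR_slope_mulr_le a c u t : 0 <= a -> 0 <= c -> 0 <= u -> 0 <= t ->
  u `^ c * ((u `^ a - t `^ a) / (u - t)) <= (u `^ (c + a) - t `^ (c + a)) / (u - t).
Proof.
move=> a0 c0 u0 t0.
have powRDca y : y `^ (c + a) = y `^ c * y `^ a.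
  have [ca0|ca0] := eqVneq (c + a) 0; last by rewrite powRD // (negbTE ca0).
  have [-> ->] : c = 0 /\ a = 0 by split; lra.
  by rewrite addr0 powRr0 mulr1.
rewrite !powRDca -subr_ge0.
have -> : (u `^ c * u `^ a - t `^ c * t `^ a) / (u - t)
          - u `^ c * ((u `^ a - t `^ a) / (u - t))
        = t `^ a * ((u `^ c - t `^ c) / (u - t)) by ring.
by rewrite mulr_ge0 ?powR_ge0 ?powR_slope_ge0.
Qed.

End powR_slope.

Lemma measurable_inv (R : realType) : measurable_fun [set: R] GRing.inv.
Proof.
have -> : [set: R] = [set x | x != 0] `|` [set 0].
  by apply/seteqP; split => x // _; case: (eqVneq x 0) => [->|]; [right|left].
apply/measurable_funU.
- exact (@open_measurable R _ (@open_neq R 0)).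
- exact: measurable_set1.
- split; last exact: measurable_fun_set1.
  apply: open_continuous_measurable_fun; first exact: open_neq.
  by move=> x; rewrite inE => x0; exact: inv_continuous.
Qed.

Section Rintegral_sum.
Context d (T : measurableType d) (R : realType) (mu : {measure set T -> \bar R}).

Lemma Rintegral_sum (D : set T) (I : Type) (s : seq I) (F : I -> T -> R) :
  measurable D -> (forall i, mu.-integrable D (EFin \o F i)) ->
  Rintegral mu D (fun t => \sum_(i <- s) F i t) = \sum_(i <- s) Rintegral mu D (F i).
Proof.
move=> mD iF; elim: s => [|i s IH].
  by rewrite big_nil /Rintegral; under eq_integral do rewrite big_nil; rewrite integral0.
rewrite big_cons -IH; under eq_Rintegral do rewrite big_cons.
rewrite RintegralD //.
have -> : EFin \o (fun t => \sum_(j <- s) F j t) = (fun t => \sum_(j <- s) (F j t)%:E).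
  by apply: funext => t; rewrite /= sumEFin.
by apply: integrable_sum => // j _; exact: iF.
Qed.
End Rintegral_sum.

Definition phi_majorant {R : realType} (n : nat) (t : R) : R :=
  \sum_(1 <= k < n) XMonemX k (n - k) t.

Lemma phi_majorant_ge0 {R : realType} n (t : R) : 0 <= t <= 1 -> 0 <= phi_majorant n t.
Proof.
by move=> t01; apply: sumr_ge0 => k _; apply: XMonemX_ge0; rewrite in_itv.
Qed.

Lemma phi_majorantE {R : realType} n (t : R) : 1 - t != t ->
  phi_majorant n t = t * (1 - t) * (((1 - t) ^+ n.-1 - t ^+ n.-1) / (1 - t - t)).
Proof.
move=> ut; rewrite subrXX [(_ - _) * _]mulrC mulfK ?subr_eq0 // big_distrr.
case: n => [|m]; first by rewrite /phi_majorant big_geq // big_ord0.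
rewrite /phi_majorant big_add1 big_mkord; apply: eq_bigr => i _.
have -> : (m.+1 - i.+1 = (m.-1 - i).+1)%N by have := ltn_ord i; lia.
by rewrite /XMonemX /unstable.onem /= !exprS; ring.
Qed.

Lemma phi_integrand_ge0 {R : realType} n (x t : R) : 0 <= x -> 0 <= t <= 1 ->
  0 <= phi_integrand n x t.
Proof.
move=> x0 /andP[t0 t1]; rewrite /phi_integrand.
have -> : 1 - 2 * t = (1 - t) - t by ring.
apply: mulr_ge0; first by rewrite mulr_ge0 ?powR_ge0.
by rewrite powR_slope_ge0 ?mulr_ge0 ?subr_ge0.
Qed.

Lemma phi_integrand_le_majorant {R : realType} n (x t : R) : (0 < n)%N ->
  0 <= x -> x <= 1 - n%:R^-1 -> 0 <= t <= 1 ->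
  phi_integrand n x t <= phi_majorant n t.
Proof.
move=> n0 x0 x1 /andP[t0 t1]; rewrite /phi_integrand.
have -> : 1 - 2 * t = (1 - t) - t by ring.
have [ut|ut] := eqVneq (1 - t - t) 0.
  by rewrite ut invr0 !mulr0 phi_majorant_ge0 ?t0.
have nR0 : 0 < n%:R :> R by rewrite ltr0n.
set u := 1 - t; set a := n%:R * x; set c := n%:R * (1 - x) - 1.
have a0 : 0 <= a by rewrite mulr_ge0.
have c0 : 0 <= c.
  by have := ler_wpM2l (ltW nR0) x1; rewrite mulrBr mulr1 mulfV ?gt_eqF // /c; lra.
have ca : c + a = n.-1%:R by rewrite -subn1 natrB // /c /a; ring.
rewrite phi_majorantE -/u; last by rewrite -subr_eq0.
rewrite -!powR_mulrn ?subr_ge0 // -ca.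
have -> : n%:R * (1 - x) = c + 1 by rewrite subrK.
rewrite powRD ?powRr1 ?subr_ge0 //; last by apply/implyP => /eqP; lra.
have -> : t * (u `^ c * u) = t * u * u `^ c by ring.
rewrite -mulrA.
apply: ler_wpM2l; first by rewrite mulr_ge0 ?subr_ge0.
by apply: powR_slope_mulr_le; rewrite // /u subr_ge0.
Qed.

Lemma measurable_phi_integrand (R : realType) n (x : R) :
  measurable_fun [set: R] (phi_integrand n x).
Proof.
have mB : measurable_fun [set: R] (fun t : R => 1 - t) by exact: measurable_funB.
apply: measurable_funM; apply: measurable_funM.
- exact: measurable_id.
- exact: measurableT_comp (measurable_powR _) mB.
- exact: measurable_funB (measurableT_comp (measurable_powR _) mB) (measurable_powR _).
- apply: measurableT_comp (measurable_inv R) _.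
  by apply: measurable_funB => //; exact: measurable_funM.
Qed.

Lemma integrable_phi_majorant (R : realType) n :
  (@lebesgue_measure R).-integrable `[0, 1] (EFin \o phi_majorant n).
Proof.
have -> : EFin \o phi_majorant n =
    (fun t : R => \sum_(1 <= k < n) (XMonemX k (n - k) t)%:E).
  by apply: funext => t; rewrite /= sumEFin.
by apply: integrable_sum => // k _; exact: integrable_XMonemX.
Qed.

Lemma integrable_phi_integrand (R : realType) n (x : R) : (0 < n)%N ->
  0 <= x -> x <= 1 - n%:R^-1 ->
  lebesgue_measure.-integrable `[0, 1] (EFin \o phi_integrand n x).
Proof.
move=> n0 x0 x1; apply: le_integrable (integrable_phi_majorant R n) => //.
  apply/measurable_EFinP; apply: (measurable_funS measurableT) => //.
  exact: measurable_phi_integrand.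
move=> t; rewrite /= in_itv /= => t01.
rewrite lee_fin !ger0_norm ?phi_integrand_ge0 ?phi_majorant_ge0 //.
exact: phi_integrand_le_majorant.
Qed.

Lemma Rintegral_phi_majorant (R : realType) n :
  Rintegral lebesgue_measure `[0, 1] (phi_majorant n) =
  (\sum_(1 <= k < n) k`! * (n - k)`!)%:R / n.+1`!%:R :> R.
Proof.
rewrite Rintegral_sum //; last by move=> k; exact: integrable_XMonemX.
rewrite natr_sum mulr_suml big_nat_cond [RHS]big_nat_cond.
apply: eq_bigr => k /andP[/andP[_ kn] _].
transitivity (beta_fun (R := R) k.+1 (n - k).+1); first by rewrite Rintegral_mkcond.
by rewrite beta_fun_fact subnKC // ltnW.
Qed.

Theorem lemma2p5 (R : realType) (n : nat) (hn : (3 <= n)%N) (x : R)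
  (hx0 : 0 <= x) (hx1 : x <= 1 - n%:R^-1) :
  0 <= phi n x /\ phi n x <= 4 / n%:R.
Proof.
have n0 : (0 < n)%N by apply: leq_trans hn.
split.
  apply: mulr_ge0 => //; apply: Rintegral_ge0 => t.
  by rewrite /= in_itv /=; exact: phi_integrand_ge0.
have phi_le : phi n x <= n.+1%:R * Rintegral lebesgue_measure `[0, 1] (phi_majorant n).
  apply: ler_wpM2l => //; apply: le_Rintegral => //.
  - exact: integrable_phi_integrand.
  - exact: integrable_phi_majorant.
  - by move=> t; rewrite /= in_itv /=; exact: phi_integrand_le_majorant.
apply: (le_trans phi_le); rewrite Rintegral_phi_majorant.
have -> : n.+1%:R * ((\sum_(1 <= k < n) k`! * (n - k)`!)%:R / n.+1`!%:R) =
    (\sum_(1 <= k < n) k`! * (n - k)`!)%:R / n`!%:R :> R.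
  by rewrite factS natrM; field; rewrite nat1r !pnatr_eq0 -lt0n fact_gt0.
rewrite ler_pdivrMr ?ltr0n ?fact_gt0 // mulrAC ler_pdivlMr ?ltr0n //.
by rewrite -!natrM ler_nat mulnC sum_fact_le.
Qed.
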